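(* Let $\mathit{VI}$ be a finite set of variables with $\#\mathit{VI}=n$ and $k\in\mathbb{N}$ with $1\le k\le n$. Then $\mathrm{dAtoms}(\mathit{TS}_k)=\{\,sh\in\mathrm{MI}(\mathit{TSD}_k)\mid \mathit{VI}\notin sh\,\}$.
   Context: $\mathit{SG}=\wp(\mathit{VI})\setminus\{\emptyset\}$, $\mathit{SH}=\wp(\mathit{SG})$ ordered by inclusion. $\mathrm{tuples}_k(S)=\{T\subseteq S\mid\#T=k\}$, $\mathrm{tuples}_k(sh)=\bigcup_{S'\in sh}\mathrm{tuples}_k(S')$, $\rho_{\mathit{TS}_k}(sh)=\{S\in\mathit{SG}\mid\mathrm{tuples}_k(S)\subseteq\mathrm{tuples}_k(sh)\}$, $\mathit{TS}_k=\rho_{\mathit{TS}_k}(\mathit{SH})$. $\rho_{\mathit{TSD}_k}(sh)=\{\,S\in\mathit{SG}\mid \forall T\subseteq S:\ \#T<k\implies S=\bigcup\{U\in sh\mid T\subseteq U\subseteq S\}\,\}$, $\mathit{TSD}_k=\rho_{\mathit{TSD}_k}(\mathit{SH})$. Both are complete lattices under inclusion with top $\mathit{SG}$. $\mathrm{MI}(C)$ denotes the meet-irreducible elements of a complete lattice $C$ ($x$ with $x=y\wedge z\Rightarrow x=y$ or $x=z$), and $\mathrm{dAtoms}(C)$ its dual-atoms ($x\ne\top$ with $x\le y<\top\Rightarrow x=y$). *)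

From mathcomp Require Import all_boot.
Set Implicit Arguments. Unset Strict Implicit. Unset Printing Implicit Defensive.

Section Sharing.
Variable VI : finType.

Definition SG : {set {set VI}} := [set S : {set VI} | S != set0].

Definition SH : {set {set {set VI}}} := powerset SG.

Definition tuples_set (k : nat) (S : {set VI}) : {set {set VI}} :=
  [set U in powerset S | #|U| == k].

Definition tuples_sh (k : nat) (sh : {set {set VI}}) : {set {set VI}} :=
  \bigcup_(S in sh) tuples_set k S.

Definition rho_TS (k : nat) (sh : {set {set VI}}) : {set {set VI}} :=
  [set S in SG | tuples_set k S \subset tuples_sh k sh].

Definition TS (k : nat) : {set {set {set VI}}} := [set rho_TS k sh | sh in SH].

Definition rho_TSD (k : nat) (sh : {set {set VI}}) : {set {set VI}} :=
  [set S in SG | [forall T0 : {set VI},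
      ((T0 \subset S) && (#|T0| < k)) ==>
      (S == \bigcup_(U in sh | (T0 \subset U) && (U \subset S)) U)]].

Definition TSD (k : nat) : {set {set {set VI}}} := [set rho_TSD k sh | sh in SH].

Definition is_meet_in (C : {set {set {set VI}}}) (x y z : {set {set VI}}) : bool :=
  [&& x \in C, x \subset y, x \subset z &
      [forall w in C, ((w \subset y) && (w \subset z)) ==> (w \subset x)]].

Definition MI (C : {set {set {set VI}}}) : {set {set {set VI}}} :=
  [set x in C | [forall y in C, forall z in C,
      is_meet_in C x y z ==> ((x == y) || (x == z))]].

Definition dAtoms (C : {set {set {set VI}}}) : {set {set {set VI}}} :=
  [set x in C | (x != SG) &&
      [forall y in C, ((x \subset y) && (y != SG)) ==> (x == y)]].

End Sharing.

From mathcomp Require Import all_boot.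
From mathcomp Require Import zify.
Set Implicit Arguments. Unset Strict Implicit. Unset Printing Implicit Defensive.

(* For a k-set T of variables, nonsupsets T is the set of sharing groups not
   containing T.  In TS_k it is the abstraction forbidding exactly the tuple
   T, and every element other than SG forbids some k-tuple, so the dual atoms
   of TS_k are exactly these sets.  In TSD_k, nonsupsets T is closed and every
   closed set strictly above it contains VI, so it is not the meet of two
   strictly larger closed sets.  Conversely, if a closed M omits VI, then some
   point v is not covered by the groups of M above some T0 with #|T0| < k;
   completing v |: T0 to a k-set T gives M <= nonsupsets T, and M is the meet
   of nonsupsets T with the closed set M :|: supsets T, so a meet-irreducible
   M equals nonsupsets T. *)

Section DualAtoms.
Variables (VI : finType) (k : nat).
Hypothesis k_gt0 : 0 < k.
Hypothesis k_leV : k <= #|VI|.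

Definition supsets (T : {set VI}) : {set {set VI}} := [set S in SG VI | T \subset S].
Definition nonsupsets (T : {set VI}) : {set {set VI}} :=
  [set S in SG VI | ~~ (T \subset S)].
Definition ksubsets : {set {set VI}} := [set T : {set VI} | #|T| == k].

Lemma in_SG (S : {set VI}) : (S \in SG VI) = (S != set0).
Proof. by rewrite inE. Qed.

Lemma in_supsets (T S : {set VI}) : (S \in supsets T) = (S \in SG VI) && (T \subset S).
Proof. by rewrite inE. Qed.

Lemma in_nonsupsets (T S : {set VI}) :
  (S \in nonsupsets T) = (S \in SG VI) && ~~ (T \subset S).
Proof. by rewrite inE. Qed.

Lemma ksubset_SG (T : {set VI}) : #|T| = k -> T \in SG VI.
Proof. by move=> cardT; rewrite in_SG -card_gt0 cardT. Qed.

Lemma setT_notin_nonsupsets (T : {set VI}) : [set: VI] \notin nonsupsets T.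
Proof. by rewrite in_nonsupsets subsetT andbF. Qed.

Lemma card_setU1_leq (x : VI) (A : {set VI}) m : #|A| < m -> #|x |: A| <= m.
Proof. by move=> ltAm; rewrite cardsU1 (leq_trans _ ltAm) // -add1n leq_add2r leq_b1. Qed.

Lemma card_supset_ex (B : {set VI}) m :
  #|B| <= m <= #|VI| -> exists2 T : {set VI}, B \subset T & #|T| = m.
Proof.
elim: m => [|m IH] /andP[leBm lemV].
  by exists B => //; apply/eqP; rewrite -leqn0.
have [eqBm | neBm] := eqVneq #|B| m.+1; first by exists B.
have [T BT cardT] : exists2 T : {set VI}, B \subset T & #|T| = m.
  by apply: IH; apply/andP; split; lia.
have /subsetPn [x _ xT] : ~~ ([set: VI] \subset T).
  by apply: contraTN lemV => /subset_leq_card; rewrite cardsT cardT; lia.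
exists (x |: T); first exact: subset_trans BT (subsetUr _ _).
by rewrite cardsU1 xT cardT.
Qed.

Definition covered_by (sh : {set {set VI}}) (S : {set VI}) :=
  forall T0 : {set VI}, T0 \subset S -> #|T0| < k ->
  forall x, x \in S -> exists2 U, U \in sh & [/\ T0 \subset U, U \subset S & x \in U].

Lemma rho_TSDP (sh : {set {set VI}}) (S : {set VI}) :
  reflect (S \in SG VI /\ covered_by sh S) (S \in rho_TSD k sh).
Proof.
rewrite [in X in reflect _ X]inE; apply: (iffP andP) => [[SG_S /forallP coverS] | [SG_S coverS]].
  split=> // T0 T0S cardT0 x xS.
  have /eqP defS := implyP (coverS T0) (introT andP (conj T0S cardT0)).
  move: xS; rewrite {1}defS => /bigcupP [U /andP[Ush /andP[T0U US]] xU].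
  by exists U.
split=> //; apply/forallP=> T0; apply/implyP=> /andP[T0S cardT0].
rewrite eqEsubset; apply/andP; split; last by apply/bigcupsP=> U /and3P[].
apply/subsetP=> x xS; have [U Ush [T0U US xU]] := coverS T0 T0S cardT0 x xS.
by apply/bigcupP; exists U; rewrite ?Ush ?T0U.
Qed.

Lemma rho_TSD_subSG (sh : {set {set VI}}) : rho_TSD k sh \subset SG VI.
Proof. by apply/subsetP=> S /rho_TSDP[]. Qed.

Lemma rho_TSD_ext (sh : {set {set VI}}) : sh \subset SG VI -> sh \subset rho_TSD k sh.
Proof.
move=> shSG; apply/subsetP=> S Ssh; apply/rho_TSDP; split; first exact: subsetP shSG S Ssh.
by move=> T0 T0S _ x xS; exists S.
Qed.

Lemma rho_TSD_idem (sh : {set {set VI}}) : rho_TSD k (rho_TSD k sh) \subset rho_TSD k sh.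
Proof.
apply/subsetP=> S /rho_TSDP[SG_S coverS]; apply/rho_TSDP; split=> // T0 T0S cardT0 x xS.
have [U /rho_TSDP[_ coverU] [T0U US xU]] := coverS T0 T0S cardT0 x xS.
have [V Vsh [T0V VU xV]] := coverU T0 T0U cardT0 x xU.
by exists V => //; split=> //; exact: subset_trans VU US.
Qed.

Lemma rho_TSD_mono (sh1 sh2 : {set {set VI}}) :
  sh1 \subset sh2 -> rho_TSD k sh1 \subset rho_TSD k sh2.
Proof.
move=> sh12; apply/subsetP=> S /rho_TSDP[SG_S coverS]; apply/rho_TSDP.
split=> // T0 T0S cardT0 x xS; have [U Ush1 UT0x] := coverS T0 T0S cardT0 x xS.
by exists U => //; exact: subsetP sh12 U Ush1.
Qed.

Lemma TSDP (y : {set {set VI}}) : reflect (rho_TSD k y = y) (y \in TSD VI k).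
Proof.
apply: (iffP imsetP) => [[sh _ ->] | fix_y].
  by apply/eqP; rewrite eqEsubset rho_TSD_idem rho_TSD_ext ?rho_TSD_subSG.
by exists y => //; rewrite /SH powersetE -fix_y rho_TSD_subSG.
Qed.

Lemma rho_TSD_id (y : {set {set VI}}) : y \in TSD VI k -> rho_TSD k y = y.
Proof. exact: elimT (TSDP y). Qed.

Lemma TSD_subSG (y : {set {set VI}}) : y \in TSD VI k -> y \subset SG VI.
Proof. by move/rho_TSD_id <-; exact: rho_TSD_subSG. Qed.

Lemma TSD_setI (y z : {set {set VI}}) :
  y \in TSD VI k -> z \in TSD VI k -> y :&: z \in TSD VI k.
Proof.
move=> yTSD zTSD; apply/TSDP/eqP; rewrite eqEsubset subsetI.
rewrite rho_TSD_ext ?(subset_trans (subsetIl y z) (TSD_subSG yTSD)) // andbT.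
rewrite -{2}(rho_TSD_id yTSD) -{3}(rho_TSD_id zTSD).
by rewrite !rho_TSD_mono ?subsetIl ?subsetIr.
Qed.

Lemma TSD_setU_supsets (y : {set {set VI}}) (T : {set VI}) :
  y \in TSD VI k -> y :|: supsets T \in TSD VI k.
Proof.
move=> yTSD; apply/TSDP/eqP; rewrite eqEsubset rho_TSD_ext ?andbT; last first.
  by rewrite subUset TSD_subSG //=; apply/subsetP=> S; rewrite in_supsets => /andP[].
apply/subsetP=> S /rho_TSDP[SG_S coverS]; rewrite in_setU in_supsets SG_S /=.
have [_ | TnS] := boolP (T \subset S); first by rewrite orbT.
rewrite orbF -(rho_TSD_id yTSD).
apply/rho_TSDP; split=> // T0 T0S cardT0 x xS.
have [U] := coverS T0 T0S cardT0 x xS; rewrite in_setU in_supsets.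
case/orP=> [Uy | /andP[_ TU]] [T0U US xU]; first by exists U.
by rewrite (subset_trans TU US) in TnS.
Qed.

(* Covering setT at x over T0: x |: T0 covers itself unless it contains T,
   in which case it equals T and S covers it. *)
Lemma setT_in_TSD_above (T : {set VI}) (y : {set {set VI}}) :
  #|T| = k -> y \in TSD VI k -> nonsupsets T \proper y -> [set: VI] \in y.
Proof.
move=> cardT yTSD /properP[Xy [S Sy SnX]].
have SG_S := subsetP (TSD_subSG yTSD) S Sy.
have TsubS : T \subset S by move: SnX; rewrite in_nonsupsets SG_S negbK.
rewrite -(rho_TSD_id yTSD); apply/rho_TSDP; split.
  by rewrite in_SG; apply: contraTneq SG_S => eqT0; rewrite in_SG -subset0 -eqT0 subsetT.
move=> T0 _ cardT0 x _; have [TxT0 | TnxT0] := boolP (T \subset x |: T0).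
  have defT : x |: T0 = T.
    by apply/eqP; rewrite eq_sym eqEcard TxT0 cardT ?card_setU1_leq.
  exists S => //; split; last by apply: (subsetP TsubS); rewrite -defT setU11.
    by rewrite (subset_trans (subsetU1 x T0)) // defT.
  exact: subsetT.
exists (x |: T0); last by rewrite subsetUr subsetT setU11.
apply: (subsetP Xy); rewrite in_nonsupsets TnxT0 andbT in_SG.
by apply/set0Pn; exists x; rewrite setU11.
Qed.

Lemma nonsupsets_TSD (T : {set VI}) : #|T| = k -> nonsupsets T \in TSD VI k.
Proof.
move=> cardT; apply/TSDP/eqP; rewrite eqEsubset rho_TSD_ext ?andbT; last first.
  by apply/subsetP=> S; rewrite in_nonsupsets => /andP[].
apply/subsetP=> S /rho_TSDP [SG_S coverS]; rewrite in_nonsupsets SG_S /=.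
apply/negP=> TsubS; have [t tT] : exists t, t \in T by apply/set0Pn; rewrite -card_gt0 cardT.
have cardTt : #|T :\ t| < k by rewrite -cardT (cardsD1 t T) tT.
have [U] := coverS (T :\ t) (subset_trans (subD1set T t) TsubS) cardTt t (subsetP TsubS t tT).
rewrite in_nonsupsets => /andP[_ /negP TnU] [TtU _ tU]; apply: TnU.
by rewrite -(setD1K tT) subUset sub1set tU.
Qed.

Lemma MI_meet (C : {set {set {set VI}}}) (x y z : {set {set VI}}) :
  x \in MI C -> y \in C -> z \in C -> is_meet_in C x y z -> x = y \/ x = z.
Proof.
rewrite inE => /andP[_ /forallP irr] yC zC meet_xyz.
have /forall_inP/(_ z zC)/implyP/(_ meet_xyz)/orP[] := implyP (irr y) yC.
  by left; apply/eqP.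
by right; apply/eqP.
Qed.

Lemma nonsupsets_MI (T : {set VI}) : #|T| = k -> nonsupsets T \in MI (TSD VI k).
Proof.
move=> cardT; rewrite inE nonsupsets_TSD //=.
apply/forall_inP=> y yTSD; apply/forall_inP=> z zTSD.
apply/implyP=> /and4P[_ Xy Xz glb].
have [// | neXy] := eqVneq (nonsupsets T) y; have [// | neXz] := eqVneq (nonsupsets T) z.
have Ty : [set: VI] \in y by apply: (setT_in_TSD_above cardT); rewrite ?properEneq ?neXy.
have Tz : [set: VI] \in z by apply: (setT_in_TSD_above cardT); rewrite ?properEneq ?neXz.
have /implyP := forall_inP glb _ (TSD_setI yTSD zTSD).
rewrite subsetIl subsetIr => /(_ isT)/subsetP/(_ [set: VI]).
by rewrite in_setI Ty Tz (negPf (setT_notin_nonsupsets T)) => /(_ isT).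
Qed.

Lemma meet_nonsupsets_setU_supsets (y : {set {set VI}}) (T : {set VI}) :
  y \in TSD VI k -> y \subset nonsupsets T ->
  is_meet_in (TSD VI k) y (nonsupsets T) (y :|: supsets T).
Proof.
move=> yTSD yX; apply/and4P; split=> //; first exact: subsetUl.
apply/forall_inP=> w _; apply/implyP=> /andP[wX wy].
apply/subsetP=> S Sw; move: (subsetP wy S Sw) (subsetP wX S Sw).
by rewrite in_setU in_supsets in_nonsupsets => /orP[// | /andP[_ ->]] /andP[].
Qed.

Lemma TSD_subset_nonsupsets (y : {set {set VI}}) :
  y \in TSD VI k -> [set: VI] \notin y ->
  exists2 T : {set VI}, #|T| = k & y \subset nonsupsets T.
Proof.
move=> yTSD; rewrite -{1}(rho_TSD_id yTSD) inE in_SG -card_gt0 cardsT.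
rewrite (leq_trans k_gt0 k_leV) /= => /forallPn [T0].
rewrite negb_imply => /andP[/andP[_ cardT0] neVcup].
have /subsetPn [v _ vncup] : ~~ ([set: VI] \subset
    \bigcup_(U in y | (T0 \subset U) && (U \subset [set: VI])) U).
  by apply: contra neVcup => Vcup; rewrite eqEsubset Vcup subsetT.
have [T vT0T cardT] : exists2 T : {set VI}, v |: T0 \subset T & #|T| = k.
  by apply: card_supset_ex; rewrite k_leV card_setU1_leq.
exists T => //; apply/subsetP=> U Uy; rewrite in_nonsupsets (subsetP (TSD_subSG yTSD)) //=.
apply: contra vncup => TU; have vT0U := subset_trans vT0T TU.
apply/bigcupP; exists U; last by apply: (subsetP vT0U); rewrite setU11.
by rewrite Uy subsetT andbT (subset_trans (subsetU1 v T0) vT0U).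
Qed.

Lemma MI_TSD_nonsupsets (M : {set {set VI}}) :
  M \in MI (TSD VI k) -> [set: VI] \notin M ->
  exists2 T : {set VI}, #|T| = k & M = nonsupsets T.
Proof.
move=> M_MI nVM; have MTSD : M \in TSD VI k by move: M_MI; rewrite inE => /andP[].
have [T cardT MX] := TSD_subset_nonsupsets MTSD nVM.
exists T => //.
have [// | defM] := MI_meet M_MI (nonsupsets_TSD cardT) (TSD_setU_supsets T MTSD)
  (meet_nonsupsets_setU_supsets MTSD MX).
have : T \in M by rewrite defM in_setU in_supsets ksubset_SG ?subxx ?orbT.
by move/(subsetP MX); rewrite in_nonsupsets subxx andbF.
Qed.

Lemma MI_TSD_notin_setT :
  [set sh in MI (TSD VI k) | [set: VI] \notin sh] = nonsupsets @: ksubsets.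
Proof.
apply/setP=> M; rewrite inE; apply/andP/imsetP => [[M_MI nVM] | [T]].
  by have [T cardT ->] := MI_TSD_nonsupsets M_MI nVM; exists T; rewrite ?inE ?cardT.
by rewrite inE => /eqP cardT ->; rewrite nonsupsets_MI ?setT_notin_nonsupsets.
Qed.

Lemma rho_TS_nonsupsets (T : {set VI}) :
  #|T| = k -> rho_TS k (nonsupsets T) = nonsupsets T.
Proof.
move=> cardT; apply/setP=> S; rewrite inE in_nonsupsets; case SG_S: (S \in SG VI) => //=.
have [TsubS | TnS] /= := boolP (T \subset S); last first.
  by apply: (bigcup_sup S); rewrite in_nonsupsets SG_S.
have Tk : T \in tuples_set k S by rewrite inE powersetE TsubS cardT eqxx.
apply/negbTE/negP => /subsetP/(_ T Tk)/bigcupP [U].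
by rewrite in_nonsupsets => /andP[_ /negPf TnU]; rewrite inE powersetE TnU.
Qed.

Lemma nonsupsets_TS (T : {set VI}) : #|T| = k -> nonsupsets T \in TS VI k.
Proof.
move=> cardT; apply/imsetP; exists (nonsupsets T); last by rewrite rho_TS_nonsupsets.
by rewrite /SH powersetE; apply/subsetP=> S; rewrite in_nonsupsets => /andP[].
Qed.

Lemma TS_subset_nonsupsets (y : {set {set VI}}) :
  y \in TS VI k -> y != SG VI -> exists2 T : {set VI}, #|T| = k & y \subset nonsupsets T.
Proof.
case/imsetP=> sh _ -> neSG.
have /subsetPn [S SG_S] : ~~ (SG VI \subset rho_TS k sh).
  apply: contra neSG => SGsub; rewrite eqEsubset SGsub andbT.
  by apply/subsetP=> S; rewrite inE => /andP[].
rewrite inE SG_S => /subsetPn [T]; rewrite inE powersetE => /andP[TsubS /eqP cardT] Tnsh.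
exists T => //; apply/subsetP=> S'; rewrite inE in_nonsupsets => /andP[SG_S' tuplesS'].
rewrite SG_S'; apply: contra Tnsh => TsubS'; apply: (subsetP tuplesS').
by rewrite inE powersetE TsubS' cardT eqxx.
Qed.

Lemma nonsupsets_neqSG (T : {set VI}) : T \in SG VI -> nonsupsets T != SG VI.
Proof.
by move=> SG_T; apply: contraTneq SG_T => <-; rewrite in_nonsupsets subxx andbF.
Qed.

Lemma subset_nonsupsets (T T' : {set VI}) :
  T' \in SG VI -> (nonsupsets T \subset nonsupsets T') = (T \subset T').
Proof.
move=> SG_T'; apply/idP/idP => [XX' | TT'].
  apply/negPn/negP => TnT'; have := subsetP XX' T'.
  by rewrite !in_nonsupsets SG_T' TnT' subxx => /(_ isT).
apply/subsetP=> S; rewrite !in_nonsupsets => /andP[-> TnS].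
by apply: contra TnS; exact: subset_trans TT'.
Qed.

Lemma dAtoms_TS : dAtoms (TS VI k) = nonsupsets @: ksubsets.
Proof.
apply/setP=> x; rewrite inE; apply/and3P/imsetP => [[xTS neSG /forall_inP max] | [T]].
  have [T cardT xX] := TS_subset_nonsupsets xTS neSG.
  exists T; first by rewrite inE cardT.
  have := max _ (nonsupsets_TS cardT).
  by rewrite xX nonsupsets_neqSG ?ksubset_SG // => /eqP.
rewrite inE => /eqP cardT ->; split; rewrite ?nonsupsets_TS ?nonsupsets_neqSG ?ksubset_SG //.
apply/forall_inP=> y yTS; apply/implyP=> /andP[Xy neSG].
have [T' cardT' yX'] := TS_subset_nonsupsets yTS neSG.
have /(subset_trans Xy) := yX'; rewrite subset_nonsupsets ?ksubset_SG // => TT'.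
have defT' : T = T' by apply/eqP; rewrite eqEcard TT' cardT cardT' leqnn.
by rewrite eqEsubset Xy defT'.
Qed.

End DualAtoms.

Theorem corollary4p4 (VI : finType) (n k : nat) :
  #|VI| = n -> 1 <= k <= n ->
  dAtoms (TS VI k) = [set sh in MI (TSD VI k) | [set: VI] \notin sh].
Proof.
move=> <- /andP[k_gt0 k_leV].
by rewrite dAtoms_TS // MI_TSD_notin_setT.
Qed.
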